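(* Let $A=\mathbb{Q}[X]$, $K=\mathbb{Q}(X)$, $B=A[T,Y,Z]=A^{[3]}$, and let $D\in\operatorname{LND}_A(B)$ be defined by $D(T)=0$, $D(Y)=X$, $D(Z)=Y$. Then $\operatorname{rank} D=2$, $\operatorname{rank} D_K=1$, and $D$ is not rigid: both $(T,Y,Z)$ and $(T',Y,Z)$ with $T'=T-Y^2+2XZ$ lie in $\Gamma_D(B)$, but $A[T]\neq A[T']$.
   Context: $D_K$ is the extension of $D$ to $K^{[3]}=K[T,Y,Z]$. If $B=A^{[n]}$, a coordinate system of $B$ over $A$ is an ordered $n$-tuple $(X_1,\dots,X_n)$ of elements of $B$ with $A[X_1,\dots,X_n]=B$; $\Gamma(B)$ denotes the set of all such. $\operatorname{LND}_A(B)$ is the set of locally nilpotent $A$-derivations of $B$. The rank of $D$ is the least integer $r\ge 0$ such that there is a coordinate system $(X_1,\dots,X_n)$ of $B$ over $A$ with $A[X_1,\dots,X_{n-r}]\subset\ker D$. For $D$ of rank $r$, $\Gamma_D(B)$ is the set of $(X_1,\dots,X_n)\in\Gamma(B)$ with $A[X_1,\dots,X_{n-r}]\subset \ker D$. $D$ is rigid if $A[X_1,\dots,X_{n-r}]=A[X_1',\dots,X_{n-r}']$ whenever $(X_1,\dots,X_n)$ and $(X_1',\dots,X_n')$ both belong to $\Gamma_D(B)$. *)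

(* B = A^[3] is modelled as the iterated polynomial ring
   {poly {poly {poly R}}}: innermost variable T, middle Y, outermost Z. *)
From HB Require Import structures.
From mathcomp Require Import all_boot all_order all_algebra fraction.
Set Implicit Arguments. Unset Strict Implicit. Unset Printing Implicit Defensive.
Import Order.TTheory GRing.Theory Num.Theory.
Local Open Scope ring_scope.

Definition B3 (R : comNzRingType) := {poly {poly {poly R}}}.

Definition c3 (R : comNzRingType) (a : R) : B3 R := a%:P%:P%:P.

Definition varT (R : comNzRingType) : B3 R := 'X%:P%:P.
Definition varY (R : comNzRingType) : B3 R := 'X%:P.
Definition varZ (R : comNzRingType) : B3 R := 'X.

Inductive gen (R : comNzRingType) (xs : seq (B3 R)) : B3 R -> Prop :=
| gen_const : forall a : R, gen xs (c3 a)
| gen_var   : forall x, x \in xs -> gen xs x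
| gen_add   : forall b1 b2, gen xs b1 -> gen xs b2 -> gen xs (b1 + b2)
| gen_mul   : forall b1 b2, gen xs b1 -> gen xs b2 -> gen xs (b1 * b2).

Definition coord_sys (R : comNzRingType) (xs : seq (B3 R)) : Prop :=
  size xs = 3%N /\ forall b : B3 R, gen xs b.

Definition is_LND (R : comNzRingType) (D : B3 R -> B3 R) : Prop :=
  [/\ forall b1 b2, D (b1 + b2) = D b1 + D b2,
      forall (a : R) b, D (c3 a * b) = c3 a * D b,
      forall b1 b2, D (b1 * b2) = b1 * D b2 + D b1 * b2
    & forall b, exists n : nat, iter n D b = 0].

Definition kills_first (R : comNzRingType) (D : B3 R -> B3 R) (r : nat)
    (xs : seq (B3 R)) : Prop :=
  forall b, gen (take (3 - r) xs) b -> D b = 0.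

(* Gamma_D(B) for r the rank of D *)
Definition in_Gamma (R : comNzRingType) (D : B3 R -> B3 R) (r : nat)
    (xs : seq (B3 R)) : Prop :=
  coord_sys xs /\ kills_first D r xs.

Definition rank_is (R : comNzRingType) (D : B3 R -> B3 R) (r : nat) : Prop :=
  (exists xs, in_Gamma D r xs) /\
  (forall r' : nat, (r' < r)%N -> ~ exists xs, in_Gamma D r' xs).

Definition rigid (R : comNzRingType) (D : B3 R -> B3 R) : Prop :=
  forall r : nat, rank_is D r ->
  forall xs xs', in_Gamma D r xs -> in_Gamma D r xs' ->
  forall b, gen (take (3 - r) xs) b <-> gen (take (3 - r) xs') b.

(* The derivation x * d/dY + Y * d/dZ on R[T,Y,Z]; it is the R-derivation
   with D(T) = 0, D(Y) = x, D(Z) = Y. *)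
Definition Dx (R : comNzRingType) (x : R) (p : B3 R) : B3 R :=
  c3 x * map_poly deriv p + varY R * deriv p.

Definition A := {poly rat}.
Definition K := {fraction {poly rat}}.

Definition D : B3 A -> B3 A := Dx ('X : A).
Definition D_K : B3 K -> B3 K := Dx (@FracField.tofrac _ ('X : {poly rat}) : K).

Definition T' : B3 A := varT A - varY A ^+ 2 + 2%:R * c3 ('X : A) * varZ A.

From HB Require Import structures.
From mathcomp Require Import all_boot all_order all_algebra fraction ring zify.
Import Order.TTheory GRing.Theory Num.Theory.
Local Open Scope ring_scope.
Set Implicit Arguments. Unset Strict Implicit.

(* The proof proceeds in general
   rings and only specialises to A = Q[X], K = Q(X) at the end:
   - Dx x is an R-derivation, and is locally nilpotent because it strictly
     lowers the weight deg_Y + 2 deg_Z;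
   - the kernel of D is a subalgebra, and three elements generating T, Y, Z
     form a coordinate system;
   - the elements kerT c = T + cY^2 - 2cxZ are killed by D; (kerT c, Y, Z)
     is always a coordinate system, and (T, kerT 1, Y) is one when 2x is a
     unit, which gives rank 1 over K;
   - over a domain with x nonzero and not a unit, a rank-1 system would make
     D of its third member a constant unit dividing x, so the rank is 2;
   - T' = kerT X (-1) has a nonzero Z-coefficient, so A[T] <> A[T'], and
     the two coordinate systems (T,Y,Z), (T',Y,Z) witness non-rigidity. *)

Section Derivation.
Variable R : comNzRingType.
Implicit Types (p q : B3 R) (a : R).

(* The partial derivative with respect to Y (the middle variable): it
   differentiates every coefficient of p viewed as a polynomial in Z;
   [deriv] itself is the partial derivative with respect to Z. *)
Definition dY (p : B3 R) : B3 R := map_poly deriv p.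

Lemma coef_dY p i : (dY p)`_i = deriv p`_i.
Proof. by rewrite /dY coef_map_id0 // deriv0. Qed.

Lemma dYD p q : dY (p + q) = dY p + dY q.
Proof. by apply/polyP => i; rewrite coefD !coef_dY coefD derivD. Qed.

(* dY satisfies the Leibniz rule, since it is [deriv] applied inside a
   convolution of coefficients. *)
Lemma dYM p q : dY (p * q) = p * dY q + dY p * q.
Proof.
apply/polyP => i; rewrite coefD coef_dY !coefM raddf_sum -big_split /=.
by apply: eq_bigr => j _; rewrite derivM !coef_dY addrC.
Qed.

Lemma dY_const (b : {poly R}) : dY b%:P%:P = 0.
Proof. by rewrite /dY map_polyC /= derivC polyC0. Qed.

Lemma dY_varY : dY (varY R) = 1.
Proof. by rewrite /dY /varY map_polyC /= derivX. Qed.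

Lemma dY_varZ : dY (varZ R) = 0.
Proof.
apply/polyP => i; rewrite coef_dY coefX coef0.
by case: (i == 1)%N; rewrite ?deriv0 // -polyC1 derivC.
Qed.

Lemma c3M a a' : c3 (a * a') = c3 a * c3 a'.
Proof. by rewrite /c3 !polyCM. Qed.

Lemma c3N a : c3 (- a) = - c3 a.
Proof. by rewrite /c3 !polyCN. Qed.

Lemma c3_nat n : c3 (n%:R : R) = n%:R.
Proof. by rewrite /c3 !polyC_natr. Qed.

Variable x : R.
Local Notation D := (Dx x).

Lemma DxD p q : D (p + q) = D p + D q.
Proof. by rewrite /Dx -!/(dY _) dYD derivD mulrDr mulrDr addrACA. Qed.

Lemma DxN p : D (- p) = - D p.
Proof.
apply/eqP; rewrite -addr_eq0 -DxD addNr.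
by rewrite /Dx -!/(dY _) /dY map_poly0 deriv0 !mulr0 addr0.
Qed.

Lemma DxM p q : D (p * q) = p * D q + D p * q.
Proof. rewrite /Dx -!/(dY _) dYM derivM; ring. Qed.

Lemma Dx_c3 a : D (c3 a) = 0.
Proof. by rewrite /Dx -!/(dY _) /c3 dY_const derivC !mulr0 addr0. Qed.

Lemma Dx_c3M a p : D (c3 a * p) = c3 a * D p.
Proof. by rewrite DxM Dx_c3; move: (c3 a) (D p) => C Q; rewrite mul0r addr0. Qed.

Lemma DxT : D (varT R) = 0.
Proof. by rewrite /Dx -!/(dY _) /varT dY_const derivC !mulr0 addr0. Qed.

Lemma DxY : D (varY R) = c3 x.
Proof. by rewrite /Dx -!/(dY _) dY_varY /varY derivC mulr1 mulr0 addr0. Qed.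

Lemma DxZ : D (varZ R) = varY R.
Proof. by rewrite /Dx -!/(dY _) dY_varZ /varZ derivX mulr0 mulr1 add0r. Qed.

(* Give the monomial Z^i Y^j T^k the weight j + 2i; [weight_lt n p] says
   that every monomial of p has weight < n.  D strictly lowers weights,
   which is why it is locally nilpotent. *)
Definition weight_lt (n : nat) (p : B3 R) : Prop :=
  forall i j, (n <= j + 2 * i)%N -> p`_i`_j = 0.

Lemma weight_lt0 p : weight_lt 0 p -> p = 0.
Proof. by move=> h; apply/polyP => i; apply/polyP => j; rewrite !coef0 h. Qed.

Lemma weight_ltD n p : weight_lt n.+1 p -> weight_lt n (D p).
Proof.
move=> h i j hij.
rewrite /Dx -/(dY _) coefD /c3 /varY !coefCM coef_dY coefD !coefCM.
rewrite coef_deriv coefXM coef_deriv h ?addSn // mul0rn mulr0 add0r.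
case: j hij => [|j] hij //=.
by rewrite coefMn h ?mul0rn //; move: hij; rewrite mulnS; lia.
Qed.

Lemma weight_lt_exists p : exists n, weight_lt n p.
Proof.
set S := (\sum_(i < size p) size (p`_i)%R)%N.
exists (2 * size p + S)%N => i j hij.
have [hi|hi] := ltnP i (size p); last by rewrite [p`_i]nth_default // coef0.
have hS : (size (p`_i)%R <= S)%N.
  by rewrite /S (bigD1 (Ordinal hi)) //= leq_addr.
have hj : (S < j)%N by move: hij; clearbody S; lia.
exact/nth_default/(leq_trans hS (ltnW hj)).
Qed.

Lemma Dx_nilpotent p : exists n, iter n D p = 0.
Proof.
have [n hn] := weight_lt_exists p; exists n.
elim: n p hn => [|n IH] p hp; first exact: weight_lt0.
by rewrite iterSr; apply/IH/weight_ltD.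
Qed.

Lemma Dx_coef000 p : (D p)`_0`_0`_0 = x * (dY p)`_0`_0`_0.
Proof.
rewrite /Dx -/(dY _) /c3 /varY coefD !coefCM coefD !coefCM coefD coefCM.
by rewrite coefXM /= coef0 addr0.
Qed.

Lemma Dx_LND : is_LND D.
Proof. split; [exact: DxD | exact: Dx_c3M | exact: DxM | exact: Dx_nilpotent]. Qed.

End Derivation.

Section Subalgebras.
Variable R : comNzRingType.
Implicit Types (xs : seq (B3 R)) (b : B3 R).

Lemma gen_poly (S : nzRingType) (f : {poly S} -> B3 R) xs :
  {morph f : p q / p + q} -> {morph f : p q / p * q} ->
  gen xs (f 'X) -> (forall c, gen xs (f c%:P)) -> forall p, gen xs (f p).
Proof.
move=> fD fM gX gC; elim/poly_ind => [|p c IH]; first by rewrite -polyC0.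
by rewrite fD fM; apply: gen_add (gen_mul IH gX) (gC c).
Qed.

Lemma coord_sys3 (x1 x2 x3 : B3 R) (xs := [:: x1; x2; x3]) :
  gen xs (varT R) -> gen xs (varY R) -> gen xs (varZ R) -> coord_sys xs.
Proof.
move=> gT gY gZ; split => //.
have gTpoly (a : {poly R}) : gen xs a%:P%:P.
  apply: (gen_poly (f := fun a : {poly R} => a%:P%:P)) => //=.
  - by move=> p q; rewrite !polyCD.
  - by move=> p q; rewrite !polyCM.
  - by move=> c; exact: gen_const.
have gYpoly (a : {poly {poly R}}) : gen xs a%:P.
  exact: (gen_poly (f := polyC)) (@polyCD _) (@polyCM _) gY gTpoly a.
exact: (gen_poly (f := id)) gZ gYpoly.
Qed.

Variable x : R.
Local Notation D := (Dx x).

Lemma gen_kernel xs b : (forall y, y \in xs -> D y = 0) -> gen xs b -> D b = 0.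
Proof.
move=> hk; elim => [a|y /hk //|b1 b2 _ h1 _ h2|b1 b2 _ h1 _ h2].
- exact: Dx_c3.
- by rewrite DxD h1 h2 addr0.
- by rewrite DxM h1 h2 mulr0 mul0r addr0.
Qed.

Lemma kills_first_of r xs :
  (forall y, y \in take (3 - r) xs -> D y = 0) -> kills_first D r xs.
Proof. by move=> hk b; apply: gen_kernel. Qed.

Lemma gen_image_ideal (x1 x2 x3 : B3 R) b :
  D x1 = 0 -> D x2 = 0 -> gen [:: x1; x2; x3] b -> exists c, D b = D x3 * c.
Proof.
move=> h1 h2; elim => [a|y|b1 b2 _ [c1 e1] _ [c2 e2]|b1 b2 _ [c1 e1] _ [c2 e2]].
- by exists 0; rewrite Dx_c3 mulr0.
- rewrite !inE => /or3P [] /eqP ->; last by exists 1; rewrite mulr1.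
  + by exists 0; rewrite h1 mulr0.
  + by exists 0; rewrite h2 mulr0.
- by exists (c1 + c2); rewrite DxD e1 e2 mulrDr.
- by exists (b1 * c2 + c1 * b2); rewrite DxM e1 e2; ring.
Qed.

Lemma genT_coefZ b : gen [:: varT R] b -> b`_1 = 0.
Proof.
elim => [a|y|b1 b2 _ h1 _ h2|b1 b2 _ h1 _ h2].
- by rewrite /c3 coefC.
- by rewrite inE => /eqP ->; rewrite /varT coefC.
- by rewrite coefD h1 h2 addr0.
- rewrite coefM big_ord_recr big_ord_recr big_ord0 /= add0r.
  by rewrite subn0 subnn h1 h2 mulr0 mul0r addr0.
Qed.

End Subalgebras.

Section KernelElement.
Variable R : comNzRingType.
Variable x : R.
Local Notation D := (Dx x).

(* The family T + c Y^2 - 2 c x Z of kernel elements; for c = -1 and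
   x = X this is the element T' of the theorem. *)
Definition kerT (c : R) : B3 R :=
  varT R + c3 c * varY R ^+ 2 - c3 (2%:R * c * x) * varZ R.

Lemma Dx_kerT c : D (kerT c) = 0.
Proof.
rewrite /kerT DxD DxN DxD DxT !Dx_c3M expr2 DxM DxY DxZ !c3M c3_nat.
move: (c3 c) (c3 x) (varY R) => C X Y; ring.
Qed.

Lemma kerT_coefZ c : (kerT c)`_1 = - (2%:R * c * x)%:P%:P.
Proof.
rewrite /kerT /varT /varY /varZ /c3 -rmorphXn /= coefB coefD !coefCM !coefC.
by rewrite coefX /= mulr0 add0r mulr1 sub0r.
Qed.

Lemma varT_from_kerT c :
  varT R = kerT c + c3 (- c) * (varY R * varY R) + c3 (2%:R * c * x) * varZ R.
Proof.
rewrite /kerT c3N expr2.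
by move: (varT R) (c3 c) (varY R) (c3 (2%:R * c * x) * varZ R) => T C Y Z; ring.
Qed.

Lemma Gamma_TYZ : in_Gamma D 2 [:: varT R; varY R; varZ R].
Proof.
split; first by apply: coord_sys3; apply: gen_var; rewrite !inE eqxx ?orbT.
by apply: kills_first_of => y; rewrite inE => /eqP ->; exact: DxT.
Qed.

Lemma Gamma_kerT_YZ c : in_Gamma D 2 [:: kerT c; varY R; varZ R].
Proof.
split; last first.
  by apply: kills_first_of => y; rewrite inE => /eqP ->; exact: Dx_kerT.
pose xs := [:: kerT c; varY R; varZ R].
have gk : gen xs (kerT c) by apply: gen_var; rewrite inE eqxx.
have gY : gen xs (varY R) by apply: gen_var; rewrite !inE eqxx orbT.
have gZ : gen xs (varZ R) by apply: gen_var; rewrite !inE eqxx !orbT.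
apply: coord_sys3 => //; rewrite (varT_from_kerT c).
exact: gen_add (gen_add gk (gen_mul (gen_const _ _) (gen_mul gY gY)))
  (gen_mul (gen_const _ _) gZ).
Qed.

Lemma kerT_notin_genT c : 2%:R * c * x != 0 -> ~ gen [:: varT R] (kerT c).
Proof.
move=> hc /genT_coefZ /eqP; rewrite kerT_coefZ oppr_eq0 !polyC_eq0.
exact/negP.
Qed.

(* Rank 0 would mean D = 0, but D Y = x. *)
Lemma no_rank0 : x != 0 -> ~ exists xs, in_Gamma D 0 xs.
Proof.
move=> hx [xs [[hs hall] hk]].
have := hk (varY R); rewrite subn0 take_oversize ?hs // => /(_ (hall _)).
by rewrite DxY => /eqP; rewrite /c3 !polyC_eq0 (negbTE hx).
Qed.

End KernelElement.

Section RankOne.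
Variable R : comUnitRingType.
Variable x : R.

(* When 2x is invertible, Z = (T + Y^2 - kerT 1) / 2x, so (T, kerT 1, Y)
   is a coordinate system with T and kerT 1 in the kernel. *)
Lemma Gamma_T_kerT_Y : 2%:R * x \is a GRing.unit ->
  in_Gamma (Dx x) 1 [:: varT R; kerT x 1; varY R].
Proof.
move=> hu; split; last first.
  apply: kills_first_of => y; rewrite !inE => /orP [] /eqP ->.
    exact: DxT.
  exact: Dx_kerT.
pose xs := [:: varT R; kerT x 1; varY R]; pose u := (2%:R * x)^-1.
have gT : gen xs (varT R) by apply: gen_var; rewrite inE eqxx.
have gk : gen xs (kerT x 1) by apply: gen_var; rewrite !inE eqxx orbT.
have gY : gen xs (varY R) by apply: gen_var; rewrite !inE eqxx !orbT.
have eZ : varZ R = c3 u * varT R + c3 u * (varY R * varY R) + c3 (- u) * kerT x 1.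
  have h2x : c3 u * (2%:R * c3 x) = 1.
    have hu' : u * (2%:R * x) = 1 by exact: mulVr.
    have : c3 (u * (2%:R * x)) = 1 by rewrite hu' /c3 !polyC1.
    by rewrite !c3M c3_nat.
  rewrite -[LHS]mul1r -h2x c3N /kerT mulr1 c3M c3_nat /c3 !polyC1.
  rewrite -/(c3 x) -/(c3 u) expr2.
  by move: (c3 u) (c3 x) (varT R) (varY R) (varZ R) => U X T Y Z; ring.
apply: coord_sys3 => //; rewrite eZ.
exact: gen_add (gen_add (gen_mul (gen_const _ _) gT)
  (gen_mul (gen_const _ _) (gen_mul gY gY))) (gen_mul (gen_const _ _) gk).
Qed.

Lemma rank_one : 2%:R * x \is a GRing.unit -> rank_is (Dx x) 1.
Proof.
move=> hu; split; first by exists [:: varT R; kerT x 1; varY R]; exact: Gamma_T_kerT_Y.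
case=> // _; apply: no_rank0; apply: contraTneq hu => ->.
by rewrite mulr0 unitr0.
Qed.

End RankOne.

Lemma mul_eq_polyC (S : idomainType) (p q : {poly S}) (c : S) :
  c != 0 -> p * q = c%:P -> p = (p`_0)%:P /\ p`_0 * q`_0 = c.
Proof.
move=> hc e; split; last by rewrite -coef0M e coefC.
apply: size1_polyC; have : size (p * q) == 1%N by rewrite e size_polyC hc.
by rewrite size_mul_eq1 => /andP [/eqP -> _].
Qed.

Lemma mul_eq_c3 (S : idomainType) (p q : B3 S) (c : S) :
  c != 0 -> p * q = c3 c -> p = c3 p`_0`_0`_0.
Proof.
move=> hc e.
have hc1 : c%:P != 0 by rewrite polyC_eq0.
have hc2 : c%:P%:P != 0 by rewrite polyC_eq0.
have [ep e1] := mul_eq_polyC hc2 e.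
have [ep' e2] := mul_eq_polyC hc1 e1.
have [ep'' _] := mul_eq_polyC hc e2.
by rewrite /c3 -ep'' -ep' -ep.
Qed.

Section RankTwo.
Variable R : idomainType.
Variable x : R.

(* Rank 1 would give (x1, x2, x3) with D x1 = D x2 = 0; then D x3 divides
   both D Y = x and D Z = Y, so D x3 is a constant unit a, while the
   constant term of D x3 is a multiple of x: hence x is a unit. *)
Lemma no_rank1 : x != 0 -> x \isn't a GRing.unit ->
  ~ exists xs, in_Gamma (Dx x) 1 xs.
Proof.
move=> hx hxU [xs [[hs hall] hk]].
case: xs hs hall hk => [|x1 [|x2 [|x3 [|]]]] //= _ hall hk.
have h1 : Dx x x1 = 0 by apply: hk; apply: gen_var; rewrite /= inE eqxx.
have h2 : Dx x x2 = 0 by apply: hk; apply: gen_var; rewrite /= !inE eqxx orbT.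
have [c1 e1] := gen_image_ideal h1 h2 (hall (varY R)).
have [c2 e2] := gen_image_ideal h1 h2 (hall (varZ R)).
rewrite DxY in e1; rewrite DxZ in e2.
have hd := mul_eq_c3 hx (esym e1).
have hunit : (Dx x x3)`_0`_0`_0 * c2`_0`_1`_0 = 1.
  move/(congr1 (fun p : B3 R => p`_0`_1`_0)): e2; rewrite {1}hd.
  by rewrite /c3 /varY !coefCM coefC /= coefX coefC.
move/negP: hxU; apply; apply/unitrPr.
by exists ((dY x3)`_0`_0`_0 * c2`_0`_1`_0); rewrite mulrA -Dx_coef000.
Qed.

Lemma rank_two : x != 0 -> x \isn't a GRing.unit -> rank_is (Dx x) 2.
Proof.
move=> hx hxU; split; first by exists [:: varT R; varY R; varZ R]; exact: Gamma_TYZ.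
by case=> [|[|]] // _; [exact: no_rank0 | exact: no_rank1].
Qed.

End RankTwo.

Lemma T'_kerT : T' = kerT ('X : A) (-1).
Proof.
rewrite /T' /kerT !c3M c3N c3_nat /c3 !polyC1 -/(c3 ('X : A)).
by move: (varT A) (varY A) (varZ A) (c3 ('X : A)) => T Y Z X; ring.
Qed.

Lemma X_nonunit : ('X : A) \isn't a GRing.unit.
Proof. by rewrite poly_unitE size_polyX. Qed.

Lemma two_X_unit_K : 2%:R * (FracField.tofrac ('X : A) : K) \is a GRing.unit.
Proof.
rewrite unitfE mulf_neq0 ?tofrac_eq0 ?polyX_eq0 //.
by rewrite -(rmorph_nat (@FracField.tofrac A)) tofrac_eq0 -polyC_natr polyC_eq0.
Qed.

Theorem mainTheorem3 :
  (is_LND D /\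
   D (varT A) = 0 /\ D (varY A) = c3 ('X : A) /\ D (varZ A) = varY A) /\
  rank_is D 2 /\
  rank_is D_K 1 /\
  (in_Gamma D 2 [:: varT A; varY A; varZ A] /\ in_Gamma D 2 [:: T'; varY A; varZ A]) /\
  ~ (forall b, gen [:: varT A] b <-> gen [:: T'] b) /\
  ~ rigid D.
Proof.
have rankD : rank_is D 2 by apply: rank_two; rewrite ?polyX_eq0 ?X_nonunit.
have GammaT : in_Gamma D 2 [:: varT A; varY A; varZ A] by exact: Gamma_TYZ.
have GammaT' : in_Gamma D 2 [:: T'; varY A; varZ A].
  by rewrite T'_kerT; exact: Gamma_kerT_YZ.
have spans_differ : ~ (forall b, gen [:: varT A] b <-> gen [:: T'] b).
  move=> h; apply: (@kerT_notin_genT _ ('X : A) (-1)).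
    by rewrite mulrN1 mulNr oppr_eq0 mulf_neq0 ?polyX_eq0 // -polyC_natr polyC_eq0.
  by rewrite -T'_kerT; apply/h/gen_var; rewrite inE.
split; first by split; [exact: Dx_LND | split; [exact: DxT | split; [exact: DxY | exact: DxZ]]].
split; first exact: rankD.
split; first exact: (rank_one two_X_unit_K).
split; first by split.
split; first exact: spans_differ.
by move=> rigidD; apply/spans_differ => b; exact: rigidD rankD _ _ GammaT GammaT' b.
Qed.
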